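(* Let $D$ be a distribution over $\mathcal{X}\times\mathcal{Y}$, $\mathcal{X}\subset\mathbb{R}^d$, $\mathcal{Y}=\{1,\dots,c\}$, that is $k$-separable with $\delta$-margin. Then there is a 2-layer network $g:\mathcal{X}\to\mathbb{R}^c$ of the form $g(x)=W^T\big(\rho(u^Tx-\beta_1),\dots,\rho(u^Tx-\beta_k)\big)^T$ with $u\in\mathbb{R}^d$, $\beta_1,\dots,\beta_k\in\mathbb{R}$, $W\in\mathbb{R}^{k\times c}$ (hence $d+(c+1)k$ parameters) that classifies perfectly: with probability $1$ over $(x,y)\sim D$, the index $y$ is the unique maximizer of $j\mapsto g_j(x)$ over $j\in\{1,\dots,c\}$.
   Context: $\rho(t)=1/(1+e^{-t})$ is the sigmoid function. Definition ($k$-separable with $\delta$-margin): Let $\mathcal{X}\subset\mathbb{R}^d$ and $\mathcal{Y}=\{1,\dots,c\}$. A distribution $D$ over $\mathcal{X}\times\mathcal{Y}$ is $k$-separable with $\delta$-margin ($\delta>0$) if there exist a projection vector $a\in\mathbb{R}^d$ with $\|a\|_2=1$ and constants $b_1<b_2<\cdots<b_{k+1}$ such that, setting $\mathcal{X}_i=\{x\in\mathcal{X}: b_i+\delta<a^Tx<b_{i+1}-\delta\}$ for $i\in\{1,\dots,k\}$: (i) for each $i$ there is $y_i\in\mathcal{Y}$ with $\mathbb{P}_{(x,y)\sim D}(y=y_i\mid x\in\mathcal{X}_i)=1$; (ii) $\mathbb{P}_{(x,y)\sim D}\big(x\in\bigcup_{i=1}^k\mathcal{X}_i\big)=1$. 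*)

From Stdlib Require Import Reals.
From mathcomp Require Import ssreflect ssrfun ssrbool eqtype ssrnat fintype bigop.
Set Implicit Arguments. Unset Strict Implicit. Unset Printing Implicit Defensive.
Open Scope R_scope.

Definition sigmoid (t : R) : R := 1 / (1 + exp (- t)).

Definition dotR (d : nat) (a x : 'I_d -> R) : R := \big[Rplus/0]_(i < d) (a i * x i).
Definition norm2 (d : nat) (a : 'I_d -> R) : R := sqrt (dotR a a).

(** sample space R^d x Y, with Y = {1,...,c} encoded as 'I_c = {0,...,c-1} *)
Definition sample (d c : nat) : Type := (('I_d -> R) * 'I_c)%type.

(** A probability distribution, modelled as a finitely additive probability
    defined on all events. *)
Record prob (T : Type) := Prob {
  pr : (T -> Prop) -> R;
  pr_ge0 : forall A, 0 <= pr A;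
  pr_full : pr (fun _ => True) = 1;
  pr_ext : forall A B : T -> Prop, (forall z, A z <-> B z) -> pr A = pr B;
  pr_add : forall A B : T -> Prop, (forall z, A z -> B z -> False) ->
           pr (fun z => A z \/ B z) = pr A + pr B
}.

Definition cond_prob (T : Type) (P : prob T) (A B : T -> Prop) : R :=
  pr P (fun z => A z /\ B z) / pr P B.

(** region X_i = { x | b_i + delta < a^T x < b_{i+1} - delta }, with the
    paper's b_1 < ... < b_{k+1} encoded as b 0 < ... < b k *)
Definition region (d : nat) (a : 'I_d -> R) (b : nat -> R) (delta : R)
  (i : nat) (x : 'I_d -> R) : Prop :=
  b i + delta < dotR a x < b (S i) - delta.

Definition k_separable (d c : nat) (D : prob (sample d c)) (k : nat) (delta : R)
  : Prop :=
  0 < delta /\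
  exists (a : 'I_d -> R) (b : nat -> R) (ylab : 'I_k -> 'I_c),
    norm2 a = 1 /\
    (forall i : nat, (i < k)%nat -> b i < b (S i)) /\
    (forall i : 'I_k,
       (* conditional probability, whenever defined (P(X_i) > 0) *)
       0 < pr D (fun z => region a b delta i z.1) ->
       cond_prob D (fun z => z.2 = ylab i)
                   (fun z => region a b delta i z.1) = 1) /\
    pr D (fun z => exists i : 'I_k, region a b delta i z.1) = 1.

Definition net2 (d c k : nat) (u : 'I_d -> R) (beta : 'I_k -> R)
  (W : 'I_k -> 'I_c -> R) (x : 'I_d -> R) (j : 'I_c) : R :=
  \big[Rplus/0]_(i < k) (W i j * sigmoid (dotR u x - beta i)).

From HB Require Import structures.
From Stdlib Require Import Reals Lra Classical.
From mathcomp Require Import ssreflect ssrfun ssrbool eqtype ssrnat seq fintype bigop.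
Open Scope R_scope.

(* Let a, b_0 < ... < b_k and labels y_0, ..., y_{k-1} witness k-separability
   with margin delta, and put s = 2/delta.  The network uses the hidden units
   act n = rho(s (a^T x - b_n)), which behave like the step 1[a^T x > b_n],
   and output weights W_{ij} = [y_i = j] - [y_{i-1} = j] (with [y_{-1} = j] = 0),
   so that g_j telescopes to (approximately) [y_m = j] on the block X_m.
   Exactly, summation by parts gives
       g_j(x) = sum_i [y_i = j] (act i - act (i+1)) + [y_{k-1} = j] act k,
   a sum of nonnegative terms of total act 0 < 1, in which the margin makes
   the gap act m - act (m+1) exceed 1/2 on X_m; hence g_{y_m} > 1/2 > g_j. *)

HB.instance Definition _ := Monoid.isComLaw.Build R 0 Rplus
  (fun x y z => esym (Rplus_assoc x y z)) Rplus_comm Rplus_0_l.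

Section FinitelyAdditiveProbability.
Variables (T : Type) (P : prob T).

Lemma pr_split (A B : T -> Prop) :
  pr P B = pr P (fun z => B z /\ A z) + pr P (fun z => B z /\ ~ A z).
Proof.
rewrite -pr_add; last by move=> z [_ ?] [_ ?].
apply: pr_ext => z; split; last by case=> [[]|[]].
by move=> hB; case: (classic (A z)); [left | right].
Qed.

Lemma pr_mono {A B : T -> Prop} : (forall z, A z -> B z) -> pr P A <= pr P B.
Proof.
move=> hAB; rewrite (pr_split A B).
have -> : pr P (fun z => B z /\ A z) = pr P A.
  by apply: pr_ext => z; split; [case | split; auto].
have := pr_ge0 P (fun z => B z /\ ~ A z); lra.
Qed.

Lemma pr_le1 (A : T -> Prop) : pr P A <= 1.
Proof. by rewrite -(pr_full P); apply: pr_mono. Qed.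

Lemma pr_empty (A : T -> Prop) : (forall z, ~ A z) -> pr P A = 0.
Proof.
move=> hA; have := @pr_add _ P A A (fun z a _ => hA z a).
have -> : pr P (fun z => A z \/ A z) = pr P A by apply: pr_ext => z; tauto.
lra.
Qed.

Lemma pr_union_le (A B : T -> Prop) :
  pr P (fun z => A z \/ B z) <= pr P A + pr P B.
Proof.
rewrite (pr_split A).
have := @pr_mono (fun z => (A z \/ B z) /\ A z) A (fun z => @proj2 _ _).
have : pr P (fun z => (A z \/ B z) /\ ~ A z) <= pr P B.
  by apply: pr_mono => z [[] ?].
lra.
Qed.

Lemma pr_cond_one_null (A B : T -> Prop) :
  (0 < pr P B -> cond_prob P A B = 1) -> pr P (fun z => B z /\ ~ A z) = 0.
Proof.
move=> hcond; have hsplit := pr_split A B.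
have hBnA := pr_ge0 P (fun z => B z /\ ~ A z).
have [hB | hB] := Rle_lt_or_eq_dec _ _ (pr_ge0 P B); last first.
  by have := @pr_mono (fun z => B z /\ ~ A z) B (fun z => @proj1 _ _); lra.
have hAB : pr P (fun z => A z /\ B z) = pr P (fun z => B z /\ A z).
  by apply: pr_ext => z; tauto.
have := hcond hB; rewrite /cond_prob hAB => hratio.
have : pr P (fun z => B z /\ A z)
       = pr P (fun z => B z /\ A z) / pr P B * pr P B by field; lra.
rewrite hratio; lra.
Qed.

Lemma pr_seq_union_null (I : eqType) (E : I -> T -> Prop) (s : seq I) :
  (forall i, pr P (E i) = 0) -> pr P (fun z => exists2 i, i \in s & E i z) = 0.
Proof.
move=> hE; elim: s => [|x s IH]; first by apply: pr_empty => z [].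
have hsub : pr P (fun z => exists2 i, i \in x :: s & E i z)
            <= pr P (fun z => E x z \/ exists2 i, i \in s & E i z).
  apply: pr_mono => z [i]; rewrite in_cons => /orP [/eqP -> | hi] hEi.
    by left.
  by right; exists i.
have := pr_union_le (E x) (fun z => exists2 i, i \in s & E i z).
have := pr_ge0 P (fun z => exists2 i, i \in x :: s & E i z).
rewrite hE IH; lra.
Qed.

Lemma pr_fin_union_null (I : finType) (E : I -> T -> Prop) :
  (forall i, pr P (E i) = 0) -> pr P (fun z => exists i, E i z) = 0.
Proof.
move=> hE; rewrite -(@pr_seq_union_null _ E (index_enum I) hE).
by apply: pr_ext => z; split=> [[i] | [i _]]; exists i => //; apply: mem_index_enum.
Qed.

Lemma pr_as_upgrade (U V N : T -> Prop) :
  pr P U = 1 -> pr P N = 0 -> (forall z, U z -> V z \/ N z) -> pr P V = 1.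
Proof.
move=> hU hN hUVN; apply: Rle_antisym; first exact: pr_le1.
have := pr_mono hUVN; have := pr_union_le V N; lra.
Qed.

End FinitelyAdditiveProbability.

Lemma sigmoid_inv (t : R) : sigmoid t = / (1 + exp (- t)).
Proof. by rewrite /sigmoid /Rdiv Rmult_1_l. Qed.

Lemma sigmoid_gt0 (t : R) : 0 < sigmoid t.
Proof. rewrite sigmoid_inv; apply: Rinv_0_lt_compat; have := exp_pos (- t); lra. Qed.

Lemma sigmoid_lt1 (t : R) : sigmoid t < 1.
Proof.
rewrite sigmoid_inv -Rinv_1; apply: Rinv_lt_contravar; have := exp_pos (- t); lra.
Qed.

Lemma sigmoid_increasing (t t' : R) : t < t' -> sigmoid t < sigmoid t'.
Proof.
move=> htt'; rewrite !sigmoid_inv.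
have : exp (- t') < exp (- t) by apply: exp_increasing; lra.
have := exp_pos (- t); have := exp_pos (- t'); move=> h1 h2 hlt.
apply: Rinv_lt_contravar; nra.
Qed.

(* e^2 > 3, the only numerical fact behind the two saturation bounds. *)
Lemma exp2_gt3 : 3 < exp 2.
Proof. have := exp_ineq1 2; lra. Qed.

Lemma sigmoid_gt_3_4 (t : R) : 2 < t -> 3 / 4 < sigmoid t.
Proof.
move=> ht; rewrite sigmoid_inv (_ : 3 / 4 = / (4 / 3)); last by field.
have hE : exp (- t) < 1 / 3.
  apply: (Rlt_trans _ (exp (- 2))); first by apply: exp_increasing; lra.
  rewrite exp_Ropp; have := exp2_gt3 => h3.
  apply: (Rmult_lt_reg_l (exp 2)); first lra.
  by rewrite Rinv_r; lra.
apply: Rinv_lt_contravar; have := exp_pos (- t); nra.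
Qed.

Lemma sigmoid_lt_1_4 (t : R) : t < - 2 -> sigmoid t < 1 / 4.
Proof.
move=> ht; rewrite sigmoid_inv (_ : 1 / 4 = / 4); last by field.
have : exp 2 < exp (- t) by apply: exp_increasing; lra.
have := exp2_gt3 => h3 hlt.
apply: Rinv_lt_contravar; nra.
Qed.

Lemma dotR_scale (d : nat) (s : R) (a x : 'I_d -> R) :
  dotR (fun l => s * a l) x = s * dotR a x.
Proof. by rewrite /dotR; elim/big_rec2: _ => [|i y1 y2 _ ->]; ring. Qed.

Definition shift_prev (p : nat -> R) (n : nat) : R :=
  if n is m.+1 then p m else 0.

Lemma sum_by_parts (p f : nat -> R) (k : nat) :
  \big[Rplus/0]_(i < k) ((p i - shift_prev p i) * f i)
  = \big[Rplus/0]_(i < k) (p i * (f i - f i.+1)) + shift_prev p k * f k.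
Proof.
elim: k => [|k IH]; first by rewrite !big_ord0 /=; ring.
by rewrite !big_ord_recr /= IH; set S := \big[Rplus/0]_(i < k) _; ring.
Qed.

Lemma sum_telescope (f : nat -> R) (k : nat) :
  \big[Rplus/0]_(i < k) (f i - f i.+1) = f 0%N - f k.
Proof.
elim: k => [|k IH]; first by rewrite big_ord0; ring.
by rewrite big_ord_recr /= IH; ring.
Qed.

Lemma weighted_sum_dominant {k : nat} {e v w : 'I_k -> R} {m : 'I_k}
    {r rv rw : R} :
  (forall i, 0 <= e i) -> (forall i, v i <= 1) -> (forall i, 0 <= w i) ->
  v m = 0 -> w m = 1 -> rv <= r -> 0 <= rw ->
  \big[Rplus/0]_(i < k) e i + r < 2 * e m ->
  \big[Rplus/0]_(i < k) (v i * e i) + rv < \big[Rplus/0]_(i < k) (w i * e i) + rw.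
Proof.
move=> he hv hw hvm hwm hr hrw htotal.
rewrite (bigD1 m) //= in htotal.
rewrite (bigD1 (F := fun i => v i * e i) m) //.
rewrite (bigD1 (F := fun i => w i * e i) m) //= hvm hwm.
set Sv := \big[Rplus/0]_(i < k | i != m) (v i * e i).
set Sw := \big[Rplus/0]_(i < k | i != m) (w i * e i).
set Se := \big[Rplus/0]_(i < k | i != m) e i in htotal.
have hrest_v : Sv <= Se.
  rewrite /Sv /Se; elim/big_rec2: _ => [|i x y _ hxy]; first lra.
  by have := hv i; have := he i; nra.
have hrest_w : 0 <= Sw.
  rewrite /Sw; elim/big_rec: _ => [|i x _ hx]; first lra.
  by have := hw i; have := he i; nra.
lra.
Qed.

Definition label_ind {k c : nat} (ylab : 'I_k -> 'I_c) (j : 'I_c) (n : nat) : R :=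
  if insub n is Some i then (if ylab i == j then 1 else 0) else 0.

Lemma label_ind_bounds {k c : nat} (ylab : 'I_k -> 'I_c) (j : 'I_c) (n : nat) :
  0 <= label_ind ylab j n <= 1.
Proof. by rewrite /label_ind; case: insub => [i|]; [case: (_ == _)|]; lra. Qed.

Lemma shift_prev_label_bounds {k c : nat} (ylab : 'I_k -> 'I_c) (j : 'I_c)
    (n : nat) :
  0 <= shift_prev (label_ind ylab j) n <= 1.
Proof. by case: n => [|n] /=; [lra | apply: label_ind_bounds]. Qed.

Lemma label_ind_ord {k c : nat} (ylab : 'I_k -> 'I_c) (j : 'I_c) (i : 'I_k) :
  label_ind ylab j i = if ylab i == j then 1 else 0.
Proof. by rewrite /label_ind valK. Qed.

Section SeparatingNetwork.
Variables (d c k : nat) (a : 'I_d -> R) (b : nat -> R) (delta : R)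
  (ylab : 'I_k -> 'I_c).
Hypothesis delta_gt0 : 0 < delta.
Hypothesis b_increasing : forall i, (i < k)%N -> b i < b i.+1.

(* The slope 2/delta turns the margin delta into sigmoid arguments beyond +-2. *)
Definition slope : R := 2 / delta.

Lemma slope_gt0 : 0 < slope.
Proof. by apply: Rdiv_lt_0_compat; lra. Qed.

(* The network: direction slope * a, thresholds slope * b_i, and output
   weights +1 entering a block labelled j, -1 leaving it. *)
Definition sep_u (l : 'I_d) : R := slope * a l.
Definition sep_beta (i : 'I_k) : R := slope * b i.
Definition sep_W (i : 'I_k) (j : 'I_c) : R :=
  label_ind ylab j i - shift_prev (label_ind ylab j) i.

(* Activation of the (possibly virtual, for n >= k) hidden unit at threshold b_n. *)
Definition act (x : 'I_d -> R) (n : nat) : R :=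
  sigmoid (slope * dotR a x - slope * b n).

Lemma sep_net_by_parts (x : 'I_d -> R) (j : 'I_c) :
  net2 sep_u sep_beta sep_W x j
  = \big[Rplus/0]_(i < k) (label_ind ylab j i * (act x i - act x i.+1))
    + shift_prev (label_ind ylab j) k * act x k.
Proof.
rewrite -sum_by_parts /net2; apply: eq_bigr => i _.
by rewrite /sep_u dotR_scale.
Qed.

Lemma act_gap_ge0 (x : 'I_d -> R) (n : nat) :
  (n < k)%N -> 0 <= act x n - act x n.+1.
Proof.
move=> hn; have := b_increasing _ hn; have := slope_gt0 => hs hb.
have : act x n.+1 < act x n by apply: sigmoid_increasing; nra.
lra.
Qed.

Lemma act_gap_large (x : 'I_d -> R) (m : nat) :
  region a b delta m x -> 1 / 2 < act x m - act x m.+1.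
Proof.
rewrite /region => hreg.
have hsd : slope * delta = 2 by rewrite /slope; field; lra.
have := slope_gt0 => hs.
have : 3 / 4 < act x m by apply: sigmoid_gt_3_4; nra.
have : act x m.+1 < 1 / 4 by apply: sigmoid_lt_1_4; nra.
lra.
Qed.

Lemma sep_net_correct (x : 'I_d -> R) (m : 'I_k) (j : 'I_c) :
  region a b delta m x -> j <> ylab m ->
  net2 sep_u sep_beta sep_W x j < net2 sep_u sep_beta sep_W x (ylab m).
Proof.
move=> hreg hj; rewrite !sep_net_by_parts.
have hgap := act_gap_large x m hreg.
have hk : 0 < act x k by apply: sigmoid_gt0.
have h0 : act x 0 < 1 by apply: sigmoid_lt1.
apply: (weighted_sum_dominant (m := m) (r := act x k)
          (e := fun i : 'I_k => act x i - act x i.+1)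
          (v := fun i : 'I_k => label_ind ylab j i)
          (w := fun i : 'I_k => label_ind ylab (ylab m) i)).
- by move=> i; apply: act_gap_ge0.
- by move=> i; case: (label_ind_bounds ylab j i).
- by move=> i; case: (label_ind_bounds ylab (ylab m) i).
- by rewrite /= label_ind_ord; case: eqP => // hm; case: hj.
- by rewrite /= label_ind_ord eqxx.
- by have := shift_prev_label_bounds ylab j k; nra.
- by have := shift_prev_label_bounds ylab (ylab m) k; nra.
- by rewrite sum_telescope; lra.
Qed.

End SeparatingNetwork.

Theorem corollary1 (d c k : nat) (D : prob (sample d c)) (delta : R) :
  k_separable D k delta ->
  exists (u : 'I_d -> R) (beta : 'I_k -> R) (W : 'I_k -> 'I_c -> R),
    pr D (fun z => forall j : 'I_c, j <> z.2 ->
                     net2 u beta W z.1 j < net2 u beta W z.1 z.2) = 1.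
Proof.
move=> [hdelta [a [b [ylab [_ [b_incr [hcond hcover]]]]]]].
exists (@sep_u d a delta), (@sep_beta k b delta), (@sep_W c k ylab).
pose mislabelled z := exists i : 'I_k, region a b delta i z.1 /\ z.2 <> ylab i.
apply: (@pr_as_upgrade _ D _ _ mislabelled hcover).
  by apply: pr_fin_union_null => i; apply: pr_cond_one_null; apply: hcond.
move=> z [m hreg]; case: (classic (z.2 = ylab m)) => [hy | hy]; last first.
  by right; exists m.
by left => j hj; rewrite hy; apply: sep_net_correct => //; rewrite -hy.
Qed.
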